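(* $URD(6;K_2,S(C_3))\supseteq J(6)=\{(1,2),(5,0)\}$; that is, for each $(r,s)\in\{(1,2),(5,0)\}$ there exists a partition of the edge set of $K_6$ into $r$ 1-factors and $s$ classes each consisting of a single 3-sun spanning all six vertices.
   Context: A 3-sun is the graph on $6$ distinct vertices $a_1,a_2,a_3,b_1,b_2,b_3$ consisting of the triangle $(a_1,a_2,a_3)$ together with the edges $\{a_i,b_i\}$, $i=1,2,3$. $URD(v;K_2,S(C_3))$ denotes the set of pairs $(r,s)$ such that the edge set of $K_v$ can be partitioned into $r$ 1-factors and $s$ classes each of which is a set of vertex-disjoint 3-suns covering every vertex exactly once. *)

From mathcomp Require Import all_boot.
Set Implicit Arguments. Unset Strict Implicit. Unset Printing Implicit Defensive.

Definition edges (v : nat) : {set {set 'I_v}} := [set e : {set 'I_v} | #|e| == 2].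

Definition one_factor (v : nat) (F : {set {set 'I_v}}) : Prop :=
  F \subset edges v /\ forall x : 'I_v, #|[set e in F | x \in e]| = 1.

(* A 3-sun, given by its 6 vertices (a1,a2,a3,b1,b2,b3), which must be distinct:
   triangle (a1,a2,a3) plus pendant edges {a_i,b_i}. *)
Record sun (v : nat) := Sun { a1 : 'I_v; a2 : 'I_v; a3 : 'I_v;
                              b1 : 'I_v; b2 : 'I_v; b3 : 'I_v }.

Definition sun_verts v (S : sun v) : seq 'I_v :=
  [:: a1 S; a2 S; a3 S; b1 S; b2 S; b3 S].

Definition sun_ok v (S : sun v) : bool := uniq (sun_verts S).

Definition sun_edges v (S : sun v) : {set {set 'I_v}} :=
  [set [set a1 S; a2 S]; [set a2 S; a3 S]; [set a1 S; a3 S];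
       [set a1 S; b1 S]; [set a2 S; b2 S]; [set a3 S; b3 S]].

Definition sun_factor v (C : seq (sun v)) : Prop :=
  all (@sun_ok v) C /\
  forall x : 'I_v, count (fun S => x \in sun_verts S) C = 1.

Definition sun_factor_edges v (C : seq (sun v)) : {set {set 'I_v}} :=
  \bigcup_(S <- C) sun_edges S.

(* (r,s) in URD(v; K_2, S(C_3)): the edge set of K_v is partitioned into
   r 1-factors and s 3-sun factors. *)
Definition URD (v r s : nat) : Prop :=
  exists (F : 'I_r -> {set {set 'I_v}}) (C : 'I_s -> seq (sun v)),
    (forall i, one_factor (F i)) /\ (forall j, sun_factor (C j)) /\
    (forall e, e \in edges v ->
       #|[set i | e \in F i]| + #|[set j | e \in sun_factor_edges (C j)]| = 1).

From mathcomp Require Import all_boot.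
Set Implicit Arguments. Unset Strict Implicit. Unset Printing Implicit Defensive.

(* For (5,0) take the rotational 1-factorization
   of K_6 on Z_5 + {oo}: F_i = {i,oo}, {i+1,i+4}, {i+2,i+3}, i in Z_5.  For
   (1,2) take the 3-suns with triangles {0,1,2} and {3,4,5} and pendant edges
   03, 14, 25 and 31, 42, 50; the three edges they miss, 04, 15, 23, form a
   1-factor. *)

Lemma eq_set2 (T : finType) (x y a b : T) : x != y ->
  ([set x; y] == [set a; b]) = (x == a) && (y == b) || (x == b) && (y == a).
Proof.
move=> nxy; apply/eqP/orP => [E | [] /andP[/eqP-> /eqP->] //]; last exact: setUC.
move: nxy; have: x \in [set a; b] by rewrite -E set21.
have: y \in [set a; b] by rewrite -E set22.
by rewrite !inE => /orP[]/eqP-> /orP[]/eqP->; rewrite ?eqxx //; [right | left].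
Qed.

Lemma card_set_in_count (T : finType) (s : seq T) (P : pred T) :
  uniq s -> #|[set x in s | P x]| = count P s.
Proof.
move=> uniq_s; rewrite cardsE -size_filter -(card_uniqP (filter_uniq P uniq_s)).
by apply: eq_card => x; rewrite mem_filter andbC.
Qed.

Lemma card_set_nth_count (T : Type) (x0 : T) (s : seq T) (P : pred T) :
  #|[set i : 'I_(size s) | P (nth x0 s i)]| = count P s.
Proof. by rewrite -sum1dep_card -sum1_count (big_nth x0) big_mkord. Qed.

Lemma one_factor_of_seq v (s : seq {set 'I_v}) :
  {subset s <= edges v} ->
  (forall x : 'I_v, count (fun e : {set 'I_v} => x \in e) s = 1) ->
  one_factor [set e in s].
Proof.
move=> edges_s cover_s.
have uniq_s : uniq s.
  apply: count_mem_uniq => e; have [e_s | /count_memPn -> //] := boolP (e \in s).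
  have /card_gt0P [x x_e] : 0 < #|e| by move/edges_s: e_s; rewrite inE => /eqP->.
  apply/eqP; rewrite eqn_leq -has_count has_pred1 e_s andbT.
  by apply: leq_trans (eq_leq (cover_s x)); apply: sub_count => e' /eqP->.
split; first by apply/subsetP => e; rewrite inE => /edges_s.
move=> x; rewrite -(cover_s x) -card_set_in_count //.
by apply: eq_card => e; rewrite !inE.
Qed.

Lemma sun_factor_spanning (S : sun 6) : sun_ok S -> sun_factor [:: S].
Proof.
move=> okS; split; first by rewrite /= okS.
move=> x /=; rewrite addn0.
have all_verts : mem (sun_verts S) =i 'I_6.
  apply/subset_cardP; last exact/subsetP.
  by rewrite card_ord (card_uniqP okS).
by rewrite all_verts.
Qed.

Lemma URD_of_seqs v (Fs : seq {set {set 'I_v}}) (Cs : seq (seq (sun v))) :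
  (forall i, i < size Fs -> one_factor (nth set0 Fs i)) ->
  (forall j, j < size Cs -> sun_factor (nth [::] Cs j)) ->
  (forall e, e \in edges v ->
     count (fun F : {set {set 'I_v}} => e \in F) Fs +
     count (fun C => e \in sun_factor_edges C) Cs = 1) ->
  URD v (size Fs) (size Cs).
Proof.
move=> oneFs sunCs partition.
exists (fun i => nth set0 Fs i), (fun j => nth [::] Cs j); split; [|split].
- by move=> i; apply: oneFs.
- by move=> j; apply: sunCs.
- move=> e /partition <-.
  by rewrite -(card_set_nth_count set0 _ (fun F => e \in F)) -(card_set_nth_count [::]).
Qed.

Lemma edges_ind v (P : {set 'I_v} -> Prop) :
  (forall x y : 'I_v, x < y -> P [set x; y]) -> forall e, e \in edges v -> P e.
Proof.
move=> P_lt e; rewrite inE => /cards2P [x [y [nxy ->]]].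
case: (ltngtP x y) => [/P_lt // | /P_lt | /val_inj eq_xy]; first by rewrite setUC.
by rewrite eq_xy eqxx in nxy.
Qed.

Definition vtx (k : nat) : 'I_6 := Ordinal (ltn_pmod k (isT : 0 < 6)).

Definition rotational_factor (i : nat) : {set {set 'I_6}} :=
  [set e in [:: [set vtx (i %% 5); vtx 5];
                [set vtx ((i + 1) %% 5); vtx ((i + 4) %% 5)];
                [set vtx ((i + 2) %% 5); vtx ((i + 3) %% 5)]]].

Lemma one_factor_rotational i : i < 5 -> one_factor (rotational_factor i).
Proof.
move=> lt_i5; apply: one_factor_of_seq.
  move=> e; rewrite !inE => /or3P[]/eqP->; rewrite cards2;
  by case: i lt_i5 => [|[|[|[|[|]]]]].
by case: i lt_i5 => [|[|[|[|[|//]]]]] _ [[|[|[|[|[|[|//]]]]]] ?]; rewrite /= !inE.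
Qed.

Lemma rotational_factors_cover_edges_once : forall e, e \in edges 6 ->
  count (fun F : {set {set 'I_6}} => e \in F) (map rotational_factor (iota 0 5)) = 1.
Proof.
apply: edges_ind => x y lt_xy; have nxy : x != y by rewrite neq_ltn lt_xy.
rewrite /= /rotational_factor !inE !(eq_set2 _ _ nxy).
by case: x lt_xy nxy => [[|[|[|[|[|[|//]]]]]] ?]; case: y => [[|[|[|[|[|[|//]]]]]] ?].
Qed.

Definition factor_04_15_23 : {set {set 'I_6}} :=
  [set e in [:: [set vtx 0; vtx 4]; [set vtx 1; vtx 5]; [set vtx 2; vtx 3]]].

Definition sun_012 : sun 6 := Sun (vtx 0) (vtx 1) (vtx 2) (vtx 3) (vtx 4) (vtx 5).
Definition sun_345 : sun 6 := Sun (vtx 3) (vtx 4) (vtx 5) (vtx 1) (vtx 2) (vtx 0).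

Lemma one_factor_04_15_23 : one_factor factor_04_15_23.
Proof.
apply: one_factor_of_seq.
  by move=> e; rewrite !inE => /or3P[]/eqP->; rewrite cards2.
by case=> [[|[|[|[|[|[|//]]]]]] ?]; rewrite /= !inE.
Qed.

Lemma suns_and_factor_cover_edges_once : forall e, e \in edges 6 ->
  (e \in factor_04_15_23) + ((e \in sun_edges sun_012) + (e \in sun_edges sun_345)) = 1.
Proof.
apply: edges_ind => x y lt_xy; have nxy : x != y by rewrite neq_ltn lt_xy.
rewrite /factor_04_15_23 /sun_edges /= !inE !(eq_set2 _ _ nxy).
by case: x lt_xy nxy => [[|[|[|[|[|[|//]]]]]] ?]; case: y => [[|[|[|[|[|[|//]]]]]] ?].
Qed.

Theorem lemma3p1 : forall r s : nat, (r, s) \in [:: (1, 2); (5, 0)] -> URD 6 r s.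
Proof.
move=> r s; rewrite !inE => /orP[] /eqP [-> ->].
- apply: (@URD_of_seqs 6 [:: factor_04_15_23] [:: [:: sun_012]; [:: sun_345]]).
  + by case=> // _; apply: one_factor_04_15_23.
  + by case=> [|[|//]] _; apply: sun_factor_spanning.
  + move=> e /suns_and_factor_cover_edges_once.
    by rewrite /= /sun_factor_edges !big_seq1 !addn0.
- apply: (@URD_of_seqs 6 (map rotational_factor (iota 0 5)) [::]) => //.
  + move=> i; rewrite size_map size_iota => lt_i5.
    by rewrite (nth_map 0) ?nth_iota ?size_iota //; apply: one_factor_rotational.
  + by move=> e /rotational_factors_cover_edges_once ->.
Qed.
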